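(* Consider a finite-space SSP game (as in the context) satisfying the Finite-Space SSP Game Model Assumption, the Q-learning iterates $\{Q_t\}$, and the sequence $\{\hat Q_t\}$ defined in the context from an essentially proper policy $\bar\nu\in\Pi_{2,SR}$ of player II. If $\{\hat Q_t\}$ is bounded below with probability 1, then so is $\{Q_t\}$.
   Context: Finite-space game: $S=\{1,\dots,n\}$, $S_o=S\cup\{0\}$, $0$ absorbing cost-free termination state. At $i\in S$ players I and II have finite control sets $U(i),V(i)$; under $(u,v)$ the state moves to $j\in S_o$ w.p. $p_{ij}(u,v)$ with transition cost $\hat g(i,u,v,j)$ paid by player I to player II. $J(i;\pi_1,\pi_2)=\liminf_{t\to\infty}E_{\pi_1\pi_2}[\sum_{k=0}^t\hat g(i_k,u_k,v_k,i_{k+1})\mid i_0=i]$. $\bar U(i)=\mathcal P(U(i))$, $\bar V(i)=\mathcal P(V(i))$; $\Pi_{1,SR},\Pi_{2,SR}$ stationary randomized policies. Prolonging pair: for some initial state the termination state is with positive probability never reached. $\nu\in\Pi_{2,SR}$ is essentially proper if some $\mu\in\Pi_{1,SR}$ makes $(\mu,\nu)$ non-prolonging and every $\mu\in\Pi_{1,SR}$ with $(\mu,\nu)$ prolonging has $J(i;\mu,\nu)=+\infty$ for some $i$. Finite-Space SSP Game Model Assumption: (i) there is $\bar\mu\in\Pi_{1,SR}$ with $J(i;\bar\mu,\nu)<+\infty$ for all $\nu\in\Pi_{2,SR}$, all $i$; (ii) there is $\bar\nu\in\Pi_{2,SR}$ with $J(i;\mu,\bar\nu)>-\infty$ for all $\mu$,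 all $i$; (iii) every prolonging pair in $\Pi_{1,SR}\times\Pi_{2,SR}$ has $J(i;\mu,\nu)\in\{\pm\infty\}$ for some $i$. Under this assumption an essentially proper $\bar\nu\in\Pi_{2,SR}$ exists; fix one and write $\bar\nu_s=\bar\nu(\cdot\mid s)$ (with $\bar\nu_0$ the point mass at $0$). Q-learning: $R=\{(i,u,v)\}$, $U(0)=V(0)=\{0\}$, vectors indexed by $R\cup\{(0,0,0)\}$ with value $0$ at $(0,0,0)$; $\underline Q(s,\rho,\sigma)=\sum_{\tilde u,\tilde v}\rho(\tilde u)\sigma(\tilde v)Q(s,\tilde u,\tilde v)$. Given random variables (on a common probability space) $Q_0$, stepsizes $\gamma_{t,\ell}\in[0,1]$, delays $0\le\tau_{\ell\tilde\ell}(t)\le t$, successors $j_t^\ell\in S_o$ ($\ell,\tilde\ell\in R$, $t\ge0$), the Q-learning iterates are $Q_{t+1}(i,u,v)=(1-\gamma_{t,\ell})Q_t(i,u,v)+\gamma_{t,\ell}(\hat g(i,u,v,s)+\inf_{\rho\in\bar U(s)}\sup_{\sigma\in\bar V(s)}\underline Q^{(\ell)}_t(s,\rho,\sigma))$ with $\ell=(i,u,v)$, $s=j_t^\ell$, $Q^{(\ell)}_t(\tilde\ell)=Q_{\tau_{\ell\tilde\ell}(t)}(\tilde\ell)$. The sequence $\{\hat Q_t\}$ uses the same random variables: $\hat Q_0=Q_0$ and $\hat Q_{t+1}(i,u,v)=(1-\gamma_{t,\ell})\hat Q_t(i,u,v)+\gamma_{t,\ell}(\hat g(i,u,v,s)+\inf_{\rho\in\bar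 U(s)}\underline{\hat Q}^{(\ell)}_t(s,\rho,\bar\nu_s))$, where $\hat Q^{(\ell)}_t(\tilde\ell)=\hat Q_{\tau_{\ell\tilde\ell}(t)}(\tilde\ell)$. *)

From HB Require Import structures.
From mathcomp Require Import all_boot all_order all_algebra.
From mathcomp Require Import all_classical all_reals all_analysis.
Set Implicit Arguments. Unset Strict Implicit. Unset Printing Implicit Defensive.
Import Order.TTheory GRing.Theory Num.Theory.
Local Open Scope ring_scope.

(* States S_o = 'I_n.+1, where ord0 is the termination state 0 and
   S = {1,...,n} are the nonzero ordinals.  Controls of player I (resp. II)
   live in a finite "universe" type U (resp. V); the control set at state i
   is the finite set Uset i (resp. Vset i). *)

Section Game.
Variables (R : realType) (n : nat) (U V : finType).
Notation state := 'I_n.+1.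

Definition dist_on (T : finType) (A : {set T}) (rho : T -> R) : Prop :=
  [/\ forall x, 0 <= rho x, forall x, x \notin A -> rho x = 0
    & \sum_(x in A) rho x = 1].

Definition SR_pol (T : finType) (A : state -> {set T}) (mu : state -> T -> R)
  : Prop := forall i : state, i != ord0 -> dist_on (A i) (mu i).

Variables (Uset : state -> {set U}) (Vset : state -> {set V}).
Variable p : state -> U -> V -> state -> R.
Variable g : state -> U -> V -> state -> R.

Definition trans (mu : state -> U -> R) (nu : state -> V -> R) (i j : state)
  : R :=
  if i == ord0 then (j == ord0)%:R
  else \sum_(u in Uset i) \sum_(v in Vset i) mu i u * nu i v * p i u v j.

Definition stage_cost (mu : state -> U -> R) (nu : state -> V -> R) (i : state)
  : R :=
  if i == ord0 then 0
  else \sum_(u in Uset i) \sum_(v in Vset i)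
         mu i u * nu i v * \sum_(j : state) p i u v j * g i u v j.

Fixpoint kstep (mu : state -> U -> R) (nu : state -> V -> R) (k : nat)
  (i j : state) : R :=
  if k is k'.+1 then \sum_(l : state) kstep mu nu k' i l * trans mu nu l j
  else (i == j)%:R.

(* J(i; mu, nu) = liminf_t E[ sum_{k=0}^t ghat(i_k,u_k,v_k,i_{k+1}) | i_0=i ] *)
Definition Jcost (mu : state -> U -> R) (nu : state -> V -> R) (i : state)
  : \bar R :=
  limn_einf (fun t : nat =>
    (\sum_(k < t.+1) \sum_(l : state) kstep mu nu k i l * stage_cost mu nu l)%:E).

(* (mu,nu) is prolonging: for some initial state, with positive probability
   the termination state is never reached, i.e. the (nondecreasing)
   probability P(i_t = 0 | i_0 = i) of having terminated by time t stays
   bounded away from 1. *)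
Definition prolonging (mu : state -> U -> R) (nu : state -> V -> R) : Prop :=
  exists2 i : state, i != ord0 &
    exists2 eps : R, 0 < eps & forall t, kstep mu nu t i ord0 <= 1 - eps.

Definition essentially_proper (nu : state -> V -> R) : Prop :=
  [/\ SR_pol Vset nu,
      (exists2 mu, SR_pol Uset mu & ~ prolonging mu nu)
    & forall mu, SR_pol Uset mu -> prolonging mu nu ->
        exists2 i : state, i != ord0 & Jcost mu nu i = +oo%E].

Definition SSP_model_assumption : Prop :=
  [/\ (exists2 mubar, SR_pol Uset mubar &
         forall nu, SR_pol Vset nu -> forall i : state, i != ord0 ->
           (Jcost mubar nu i < +oo)%E),
      (exists2 nubar, SR_pol Vset nubar &
         forall mu, SR_pol Uset mu -> forall i : state, i != ord0 ->
           (-oo < Jcost mu nubar i)%E)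
    & forall mu nu, SR_pol Uset mu -> SR_pol Vset nu -> prolonging mu nu ->
        exists2 i : state, i != ord0 &
          (Jcost mu nu i = +oo%E \/ Jcost mu nu i = -oo%E)].

Definition transition_probs : Prop :=
  forall (i : state) u v, i != ord0 -> u \in Uset i -> v \in Vset i ->
    (forall j, 0 <= p i u v j) /\ \sum_(j : state) p i u v j = 1.

(* Q-vectors: functions on state * U * V; only the entries indexed by
   R ∪ {(0,0,0)} are meaningful. *)
Definition qvec := state -> U -> V -> R.
Definition idx := (state * U * V)%type.

Definition inR (l : idx) : bool :=
  [&& l.1.1 != ord0, l.1.2 \in Uset l.1.1 & l.2 \in Vset l.1.1].

Definition Qbar (Q : qvec) (s : state) (rho : U -> R) (sigma : V -> R) : R :=
  \sum_(u in Uset s) \sum_(v in Vset s) rho u * sigma v * Q s u v.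

Definition minimax (Q : qvec) (s : state) : R :=
  inf [set x | exists2 rho, dist_on (Uset s) rho &
        x = sup [set y | exists2 sigma, dist_on (Vset s) sigma &
                   y = Qbar Q s rho sigma]].

Definition minnu (Q : qvec) (s : state) (sigma : V -> R) : R :=
  inf [set x | exists2 rho, dist_on (Uset s) rho & x = Qbar Q s rho sigma].

Definition Qdel (Qs : nat -> qvec) (tau : idx -> idx -> nat -> nat)
  (l : idx) (t : nat) : qvec :=
  fun s u v => Qs (tau l (s, u, v) t) s u v.

End Game.

Definition pol_at (R : realType) (n : nat) (V : finType) (v0 : V)
  (nu : 'I_n.+1 -> V -> R) (s : 'I_n.+1) : V -> R :=
  if s == ord0 then (fun v => (v == v0)%:R) else nu s.

(** The iterations for [Q] and [Qhat] use the same stepsizes, delays and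
    successor states, and differ only in the value of the successor state:
    [minimax] for [Q] against [minnu] at the fixed strategy [nubar] of player
    II for [Qhat].  Fixing player II's mixed strategy can only lower the
    min-max, and both updates are monotone in the (delayed) past iterates, so
    by strong induction on [t] we get [Qhat t <= Q t] on every sample path.
    A lower bound for [Qhat] is then a lower bound for [Q]. *)
From HB Require Import structures.
From mathcomp Require Import all_boot all_order all_algebra.
From mathcomp Require Import all_classical all_reals all_analysis.
Set Implicit Arguments. Unset Strict Implicit. Unset Printing Implicit Defensive.
Import Order.TTheory GRing.Theory Num.Theory.
Local Open Scope ring_scope.

Section Distributions.
Variables (R : realType) (T : finType) (A : {set T}).

Lemma dist_on_le1 (rho : T -> R) x : dist_on A rho -> rho x <= 1.
Proof.
case=> rho_ge0 rho_out rho_sum; have [xA|xNA] := boolP (x \in A); last first.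
  by rewrite rho_out.
by rewrite -rho_sum (bigD1 x) //= lerDl sumr_ge0.
Qed.

Lemma dist_on_pt x0 : x0 \in A -> dist_on A (fun x => (x == x0)%:R : R).
Proof.
move=> x0A; split=> [x|x|]; first by rewrite ler0n.
  by case: eqP => // ->; rewrite x0A.
by rewrite (bigD1 x0) //= eqxx big1 ?addr0 // => x /andP[_ /negbTE ->].
Qed.

End Distributions.

Section MinimaxComparison.
Variables (R : realType) (n : nat) (U V : finType).
Variables (Uset : 'I_n.+1 -> {set U}) (Vset : 'I_n.+1 -> {set V}).
Implicit Types (Q : qvec R n U V) (s : 'I_n.+1).

Lemma Qbar_norm_le Q s rho sigma :
  dist_on (Uset s) rho -> dist_on (Vset s) sigma ->
  `|Qbar Uset Vset Q s rho sigma|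
    <= \sum_(u in Uset s) \sum_(v in Vset s) `|Q s u v|.
Proof.
move=> rho_dist sigma_dist.
apply: le_trans (ler_norm_sum _ _ _) _; apply: ler_sum => u _.
apply: le_trans (ler_norm_sum _ _ _) _; apply: ler_sum => v _.
have rho_ge0 : 0 <= rho u by case: rho_dist.
have sigma_ge0 : 0 <= sigma v by case: sigma_dist.
rewrite normrM; apply: ler_piMl => //.
rewrite normrM !ger0_norm //.
by apply: mulr_ile1 => //; [exact: dist_on_le1 rho_dist | exact: dist_on_le1 sigma_dist].
Qed.

Lemma ler_Qbar Q1 Q2 s rho sigma :
  (forall u, 0 <= rho u) -> (forall v, 0 <= sigma v) ->
  (forall u v, u \in Uset s -> v \in Vset s -> Q1 s u v <= Q2 s u v) ->
  Qbar Uset Vset Q1 s rho sigma <= Qbar Uset Vset Q2 s rho sigma.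
Proof.
move=> rho_ge0 sigma_ge0 leQ.
apply: ler_sum => u uA; apply: ler_sum => v vA.
by apply: ler_wpM2l; [rewrite mulr_ge0 | apply: leQ].
Qed.

(* Both infima and the supremum are over sets bounded by [Qbar_norm_le]:
   minnu Q1 s sigma0 <= Qbar Q1 s rho sigma0 <= Qbar Q2 s rho sigma0
   <= sup_sigma Qbar Q2 s rho sigma, for every rho. *)
Lemma minnu_le_minimax Q1 Q2 s u0 sigma0 :
  u0 \in Uset s -> dist_on (Vset s) sigma0 ->
  (forall u v, u \in Uset s -> v \in Vset s -> Q1 s u v <= Q2 s u v) ->
  minnu Uset Vset Q1 s sigma0 <= minimax Uset Vset Q2 s.
Proof.
move=> u0s sigma0_dist leQ; apply: lb_le_inf.
  by eexists; exists (fun u => (u == u0)%:R); first exact: dist_on_pt.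
move=> _ [rho rho_dist ->].
have lb_Q1 : has_lbound [set x | exists2 rho, dist_on (Uset s) rho &
                            x = Qbar Uset Vset Q1 s rho sigma0].
  exists (- \sum_(u in Uset s) \sum_(v in Vset s) `|Q1 s u v|) => _ [r r_dist ->].
  by have := Qbar_norm_le Q1 r_dist sigma0_dist; rewrite ler_norml => /andP[].
have ub_Q2 : has_ubound [set y | exists2 sigma, dist_on (Vset s) sigma &
                            y = Qbar Uset Vset Q2 s rho sigma].
  exists (\sum_(u in Uset s) \sum_(v in Vset s) `|Q2 s u v|) => _ [sg sg_dist ->].
  by have := Qbar_norm_le Q2 rho_dist sg_dist; rewrite ler_norml => /andP[].
apply: le_trans (ge_inf lb_Q1 _) _; first by exists rho.
apply: le_trans (ub_le_sup ub_Q2 _); last by exists sigma0.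
by apply: ler_Qbar => //; [case: rho_dist | case: sigma0_dist].
Qed.

End MinimaxComparison.

Section QlearningComparison.
Variables (R : realType) (n : nat) (U V : finType).
Variables (Uset : 'I_n.+1 -> {set U}) (Vset : 'I_n.+1 -> {set V}).
Variables (u0 : U) (v0 : V) (g : 'I_n.+1 -> U -> V -> 'I_n.+1 -> R).
Variable nubar : 'I_n.+1 -> V -> R.
Variables (gamma : nat -> idx n U V -> R) (tau : idx n U V -> idx n U V -> nat -> nat).
Variables (jsucc : nat -> idx n U V -> 'I_n.+1) (Q Qhat : nat -> qvec R n U V).

Hypothesis Uset_nonempty : forall i : 'I_n.+1, i != ord0 -> (0 < #|Uset i|)%N.
Hypothesis Uset0 : Uset ord0 = [set u0].
Hypothesis Vset0 : Vset ord0 = [set v0].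
Hypothesis nubar_SR : SR_pol Vset nubar.
Hypothesis gamma01 : forall t l, inR Uset Vset l -> 0 <= gamma t l <= 1.
Hypothesis tau_le : forall l l' t, inR Uset Vset l -> inR Uset Vset l' -> (tau l l' t <= t)%N.
Hypothesis Q_Qhat0 : Qhat 0 = Q 0.
Hypothesis Q_term : forall t, Q t ord0 u0 v0 = 0.
Hypothesis Qhat_term : forall t, Qhat t ord0 u0 v0 = 0.
Hypothesis QS : forall t i u v, inR Uset Vset (i, u, v) ->
  Q t.+1 i u v = (1 - gamma t (i, u, v)) * Q t i u v
    + gamma t (i, u, v) * (g i u v (jsucc t (i, u, v))
        + minimax Uset Vset (Qdel Q tau (i, u, v) t) (jsucc t (i, u, v))).
Hypothesis QhatS : forall t i u v, inR Uset Vset (i, u, v) ->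
  Qhat t.+1 i u v = (1 - gamma t (i, u, v)) * Qhat t i u v
    + gamma t (i, u, v) * (g i u v (jsucc t (i, u, v))
        + minnu Uset Vset (Qdel Qhat tau (i, u, v) t) (jsucc t (i, u, v))
            (pol_at v0 nubar (jsucc t (i, u, v)))).

Definition Qle_upto (t : nat) : Prop :=
  forall k i u v, (k <= t)%N -> inR Uset Vset (i, u, v) -> Qhat k i u v <= Q k i u v.

Lemma exists_control s : exists u, u \in Uset s.
Proof.
have [->|s_neq0] := eqVneq s ord0; first by exists u0; rewrite Uset0 inE.
exact/card_gt0P/Uset_nonempty.
Qed.

Lemma dist_on_pol_at s : dist_on (Vset s) (pol_at v0 nubar s).
Proof.
rewrite /pol_at; have [->|s_neq0] := eqVneq s ord0; last exact: nubar_SR.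
by rewrite Vset0; apply: dist_on_pt; rewrite inE.
Qed.

(* The delayed entries at the successor state are either the termination
   entry (0 for both sequences) or entries of R with delays at most [t]. *)
Lemma minnu_Qhat_le_minimax_Q t l : Qle_upto t -> inR Uset Vset l ->
  minnu Uset Vset (Qdel Qhat tau l t) (jsucc t l) (pol_at v0 nubar (jsucc t l))
    <= minimax Uset Vset (Qdel Q tau l t) (jsucc t l).
Proof.
move=> le_upto lR; set s := jsucc t l; have [a as_] := exists_control s.
apply: (minnu_le_minimax as_ (dist_on_pol_at s)) => u v us vs.
rewrite /Qdel; have [s0|s_neq0] := eqVneq s ord0.
  move: us vs; rewrite s0 Uset0 Vset0 !inE => /eqP -> /eqP ->.
  by rewrite Q_term Qhat_term.
have sR : inR Uset Vset (s, u, v) by rewrite /inR /= s_neq0 us vs.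
exact: le_upto (tau_le t lR sR) sR.
Qed.

Lemma Qle_uptoS t : Qle_upto t -> Qle_upto t.+1.
Proof.
move=> le_upto k i u v; rewrite leq_eqVlt ltnS => /orP[/eqP-> lR|]; last exact: le_upto.
rewrite QS // QhatS //; have /andP[gamma_ge0 gamma_le1] := gamma01 t lR.
apply: lerD; first by apply: ler_wpM2l; [rewrite subr_ge0 | exact: le_upto].
apply: ler_wpM2l => //; apply: lerD => //.
exact: minnu_Qhat_le_minimax_Q.
Qed.

Lemma Qhat_le_Q t i u v : inR Uset Vset (i, u, v) -> Qhat t i u v <= Q t i u v.
Proof.
suff le_upto : Qle_upto t by exact: le_upto.
elim: t => [|t /Qle_uptoS //] k i' u' v'.
by rewrite leqn0 => /eqP -> _; rewrite Q_Qhat0.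
Qed.

End QlearningComparison.

Theorem lemma4p1
  (R : realType) (n : nat) (U V : finType)
  (Uset : 'I_n.+1 -> {set U}) (Vset : 'I_n.+1 -> {set V})
  (u0 : U) (v0 : V)
  (p g : 'I_n.+1 -> U -> V -> 'I_n.+1 -> R)
  (nubar : 'I_n.+1 -> V -> R)
  (d : measure_display) (Omega : measurableType d) (P : probability Omega R)
  (Q0 : Omega -> qvec R n U V)
  (gamma : nat -> idx n U V -> Omega -> R)
  (tau : idx n U V -> idx n U V -> nat -> Omega -> nat)
  (jsucc : nat -> idx n U V -> Omega -> 'I_n.+1)
  (Q Qhat : nat -> Omega -> qvec R n U V) :
  (* the game model *)
  (forall i : 'I_n.+1, i != ord0 -> (0 < #|Uset i|)%N) ->
  (forall i : 'I_n.+1, i != ord0 -> (0 < #|Vset i|)%N) ->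
  Uset ord0 = [set u0] -> Vset ord0 = [set v0] ->
  transition_probs Uset Vset p ->
  SSP_model_assumption Uset Vset p g ->
  essentially_proper Uset Vset p g nubar ->
  (* the random variables driving the iterations *)
  (forall t l w, inR Uset Vset l -> 0 <= gamma t l w <= 1) ->
  (forall l l' t w, inR Uset Vset l -> inR Uset Vset l' -> (tau l l' t w <= t)%N) ->
  (forall w, Q0 w ord0 u0 v0 = 0) ->
  (* Q-learning iterates *)
  (forall w, Q 0 w = Q0 w) ->
  (forall t w, Q t w ord0 u0 v0 = 0) ->
  (forall t w i u v, inR Uset Vset (i, u, v) ->
     Q t.+1 w i u v =
       (1 - gamma t (i, u, v) w) * Q t w i u v
       + gamma t (i, u, v) w *
           (g i u v (jsucc t (i, u, v) w)
            + minimax Uset Vset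
                (Qdel (fun k => Q k w) (fun l l' k => tau l l' k w) (i, u, v) t)
                (jsucc t (i, u, v) w))) ->
  (* the sequence \hat Q_t *)
  (forall w, Qhat 0 w = Q0 w) ->
  (forall t w, Qhat t w ord0 u0 v0 = 0) ->
  (forall t w i u v, inR Uset Vset (i, u, v) ->
     Qhat t.+1 w i u v =
       (1 - gamma t (i, u, v) w) * Qhat t w i u v
       + gamma t (i, u, v) w *
           (g i u v (jsucc t (i, u, v) w)
            + minnu Uset Vset
                (Qdel (fun k => Qhat k w) (fun l l' k => tau l l' k w) (i, u, v) t)
                (jsucc t (i, u, v) w)
                (pol_at v0 nubar (jsucc t (i, u, v) w)))) ->
  (* conclusion *)
  {ae P, forall w, exists c : R, forall t l, inR Uset Vset l -> c <= Qhat t w l.1.1 l.1.2 l.2} ->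
  {ae P, forall w, exists c : R, forall t l, inR Uset Vset l -> c <= Q t w l.1.1 l.1.2 l.2}.
Proof.
move=> Uset_nonempty _ Uset0 Vset0 _ _ [nubar_SR _ _] gamma01 tau_le _
  Q0E Q_term QS Qhat0E Qhat_term QhatS.
apply: filterS => w [c c_le_Qhat]; exists c => t [[i u] v] lR.
apply: le_trans (c_le_Qhat t _ lR) _.
have Qhat0_Q0 : Qhat 0 w = Q 0 w by rewrite Q0E Qhat0E.
exact: (Qhat_le_Q (g := g) (gamma := fun t l => gamma t l w)
  (tau := fun l l' t => tau l l' t w) (jsucc := fun t l => jsucc t l w)
  (Q := fun t => Q t w) (Qhat := fun t => Qhat t w)
  Uset_nonempty Uset0 Vset0 nubar_SR (fun t l => gamma01 t l w)
  (fun l l' t => tau_le l l' t w) Qhat0_Q0 (Q_term ^~ w) (Qhat_term ^~ w)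
  (QS ^~ w) (QhatS ^~ w)).
Qed.
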